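(* Let $k_1,k_2,k_3$ be real constants and use polar coordinates $x=r\cos\theta$, $y=r\sin\theta$ ($r>0$). For the potential $$V=\frac{k_1}{r^2}+\frac{k_2e^{\sqrt3\theta}+k_3e^{-\sqrt3\theta}}{r^3},$$ the function $$J=p_\theta^3+\frac34\Big[2k_1+\frac3r\big(k_2e^{\sqrt3\theta}+k_3e^{-\sqrt3\theta}\big)\Big]p_\theta+\frac{3\sqrt3}{4}\big(k_2e^{\sqrt3\theta}-k_3e^{-\sqrt3\theta}\big)p_r$$ is a first integral of $\ddot x=-V_{,x}$, $\ddot y=-V_{,y}$, where $p_r=\dot r$ and $p_\theta=x\dot y-y\dot x=r^2\dot\theta$.
   Context: A first integral is a function of $(t,x,y,\dot x,\dot y)$ whose total time derivative vanishes along every solution of the given equations of motion. *)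

From Stdlib Require Import Reals Lra.
From Coquelicot Require Import Coquelicot.
Open Scope R_scope.

Definition rad (x y : R) : R := sqrt (x ^ 2 + y ^ 2).

(* Local branch of the polar angle near a point whose angle is th0:
   rotate by -th0 and take atan; this is a smooth angle function on the
   open half-plane {x cos th0 + y sin th0 > 0}, equal to th0 at points
   with polar angle th0. *)
Definition angle_branch (th0 x y : R) : R :=
  th0 + atan ((- x * sin th0 + y * cos th0) / (x * cos th0 + y * sin th0)).

Definition Vpolar (k1 k2 k3 r th : R) : R :=
  k1 / r ^ 2 + (k2 * exp (sqrt 3 * th) + k3 * exp (- sqrt 3 * th)) / r ^ 3.

Definition Vcart (k1 k2 k3 th0 x y : R) : R :=
  Vpolar k1 k2 k3 (rad x y) (angle_branch th0 x y).

Definition Jfun (k1 k2 k3 r th pr pth : R) : R :=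
  pth ^ 3
  + 3 / 4 * (2 * k1 + 3 / r * (k2 * exp (sqrt 3 * th) + k3 * exp (- sqrt 3 * th))) * pth
  + 3 * sqrt 3 / 4 * (k2 * exp (sqrt 3 * th) - k3 * exp (- sqrt 3 * th)) * pr.

(* The proof passes from Cartesian to polar variables.
   - The Cartesian gradient of V at a point (x, y) = r (cos th, sin th) is
     obtained by the chain rule through r = rad x y and the local angle
     branch; it is expressed through the polar partial derivatives
     dV_dr = V_r and dV_dth = V_th (lemmas [Vcart_dx], [Vcart_dy]).
   - Along a motion written as x = r cos th, y = r sin th, the Cartesian
     velocity is (r' cos th - r th' sin th, r' sin th + r th' cos th); from this,
     p_theta = x y' - y x' = r^2 th' and p_r = r' = x' cos th + y' sin th.
   - Newton's equations x'' = -V_x, y'' = -V_y then become the polar equations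
     p_theta' = -V_th and p_r' = r th'^2 - V_r.
   - Finally [Jfun_conserved] checks, by differentiating J, that any curve
     (r, th, p_r, p_theta) satisfying these polar equations has dJ/dt = 0;
     the only non-rational identity needed is sqrt 3 ^ 2 = 3. *)

From Stdlib Require Import Reals Lra.
From Coquelicot Require Import Coquelicot.
Open Scope R_scope.

(* Replace every [Derive g t] in the goal by the value [d] of a hypothesis
   [is_derive f t d] with [f] convertible to [g]; the guard skips hypotheses
   that would rewrite a derivative into itself. *)
Ltac subst_derivatives :=
  repeat match goal with
  | H : is_derive ?f ?t ?d |- context [Derive ?g ?t] =>
      assert_fails constr_eq d (Derive g t);
      replace (Derive g t) with d by (symmetry; apply is_derive_unique; exact H)
  end.

(* Symbolic differentiation with Coquelicot's [auto_derive], discharging the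
   differentiability side conditions from the [is_derive] hypotheses and
   expressing the result through their derivative values. *)
Ltac differentiate :=
  auto_derive;
  [repeat split; try (eexists; eassumption); try assumption | subst_derivatives].

Lemma mul_sin2_cos2 (z phi : R) : z * (sin phi * sin phi + cos phi * cos phi) = z.
Proof.
pose proof (sin2_cos2 phi) as Hpyth; unfold Rsqr in Hpyth.
rewrite Hpyth; ring.
Qed.

Lemma rad_sq_pos (u v : R) : 0 < rad u v -> 0 < u ^ 2 + v ^ 2.
Proof.
unfold rad; intro Hr.
destruct (Req_dec (u ^ 2 + v ^ 2) 0) as [E | E]; [rewrite E, sqrt_0 in Hr; lra | nra].
Qed.

(* At a point with polar angle th0, the rotated coordinates used by
   [angle_branch] are (r, 0). *)
Lemma polar_frame (u v th0 : R) :
  u = rad u v * cos th0 -> v = rad u v * sin th0 ->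
  u * cos th0 + v * sin th0 = rad u v /\ - u * sin th0 + v * cos th0 = 0.
Proof.
set (r := rad u v); clearbody r; intros -> ->; split; [|ring].
transitivity (r * (sin th0 * sin th0 + cos th0 * cos th0)); [ring | apply mul_sin2_cos2].
Qed.

Lemma is_derive_rad (X Y : R -> R) (s dX dY : R) :
  is_derive X s dX -> is_derive Y s dY -> 0 < rad (X s) (Y s) ->
  is_derive (fun u => rad (X u) (Y u)) s ((X s * dX + Y s * dY) / rad (X s) (Y s)).
Proof.
intros HX HY Hr; pose proof (rad_sq_pos _ _ Hr) as Hsq; unfold rad in *.
differentiate.
replace (X s * (X s * 1) + Y s * (Y s * 1)) with (X s ^ 2 + Y s ^ 2) by ring.
field; lra.
Qed.

Lemma rad_dx (u v : R) : 0 < rad u v -> is_derive (fun u' => rad u' v) u (u / rad u v).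
Proof.
intro Hr.
replace (u / rad u v) with ((u * 1 + v * 0) / rad u v) by (f_equal; ring).
apply (is_derive_rad (fun u' => u') (fun _ => v)); [auto_derive; reflexivity .. | exact Hr].
Qed.

Lemma rad_dy (u v : R) : 0 < rad u v -> is_derive (fun v' => rad u v') v (v / rad u v).
Proof.
intro Hr.
replace (v / rad u v) with ((u * 0 + v * 1) / rad u v) by (f_equal; ring).
apply (is_derive_rad (fun _ => u) (fun v' => v')); [auto_derive; reflexivity .. | exact Hr].
Qed.

Lemma is_derive_polar (rho phi : R -> R) (t drho dphi : R) :
  is_derive rho t drho -> is_derive phi t dphi ->
  is_derive (fun s => rho s * cos (phi s)) t (drho * cos (phi t) - rho t * sin (phi t) * dphi) /\
  is_derive (fun s => rho s * sin (phi s)) t (drho * sin (phi t) + rho t * cos (phi t) * dphi).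
Proof. intros Hrho Hphi; split; differentiate; ring. Qed.

Lemma interval_nbhd (a b t : R) : a < t < b -> locally t (fun s => a < s < b).
Proof. intros [Hat Htb]; apply (locally_interval _ t a b); auto. Qed.

Definition Eplus (k2 k3 th : R) : R := k2 * exp (sqrt 3 * th) + k3 * exp (- sqrt 3 * th).
Definition Eminus (k2 k3 th : R) : R := k2 * exp (sqrt 3 * th) - k3 * exp (- sqrt 3 * th).

(* The polar partial derivatives V_r and V_th of [Vpolar]. *)
Definition dV_dr (k1 k2 k3 r th : R) : R := -2 * k1 / r ^ 3 - 3 * Eplus k2 k3 th / r ^ 4.
Definition dV_dth (k2 k3 r th : R) : R := sqrt 3 * Eminus k2 k3 th / r ^ 3.

Lemma Vcart_dx (k1 k2 k3 th0 u v : R) :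
  0 < rad u v -> u = rad u v * cos th0 -> v = rad u v * sin th0 ->
  is_derive (fun u' => Vcart k1 k2 k3 th0 u' v) u
    (dV_dr k1 k2 k3 (rad u v) th0 * cos th0 - dV_dth k2 k3 (rad u v) th0 * sin th0 / rad u v).
Proof.
intros Hr Hu Hv.
pose proof (rad_dx u v Hr) as Hdr.
destruct (polar_frame u v th0 Hu Hv) as [Hrad Hang].
unfold Vcart, Vpolar, angle_branch, dV_dr, dV_dth, Eplus, Eminus.
differentiate; rewrite ?Hrad, ?Hang, ?Rmult_0_l, ?atan_0, ?Rplus_0_r.
all: set (r := rad u v) in *; clearbody r.
all: try (apply Rgt_not_eq; repeat apply Rmult_lt_0_compat; lra).
rewrite Hu; field; lra.
Qed.

Lemma Vcart_dy (k1 k2 k3 th0 u v : R) :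
  0 < rad u v -> u = rad u v * cos th0 -> v = rad u v * sin th0 ->
  is_derive (fun v' => Vcart k1 k2 k3 th0 u v') v
    (dV_dr k1 k2 k3 (rad u v) th0 * sin th0 + dV_dth k2 k3 (rad u v) th0 * cos th0 / rad u v).
Proof.
intros Hr Hu Hv.
pose proof (rad_dy u v Hr) as Hdr.
destruct (polar_frame u v th0 Hu Hv) as [Hrad Hang].
unfold Vcart, Vpolar, angle_branch, dV_dr, dV_dth, Eplus, Eminus.
differentiate; rewrite ?Hrad, ?Hang, ?Rmult_0_l, ?atan_0, ?Rplus_0_r.
all: set (r := rad u v) in *; clearbody r.
all: try (apply Rgt_not_eq; repeat apply Rmult_lt_0_compat; lra).
rewrite Hv; field; lra.
Qed.

Lemma Jfun_conserved (k1 k2 k3 : R) (r th pr pth : R -> R) (t : R) :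
  r t <> 0 ->
  is_derive r t (pr t) ->
  is_derive th t (pth t / r t ^ 2) ->
  is_derive pr t (r t * (pth t / r t ^ 2) ^ 2 - dV_dr k1 k2 k3 (r t) (th t)) ->
  is_derive pth t (- dV_dth k2 k3 (r t) (th t)) ->
  is_derive (fun s => Jfun k1 k2 k3 (r s) (th s) (pr s) (pth s)) t 0.
Proof.
intros Hr Hdr Hdth Hdpr Hdpth.
unfold Jfun; differentiate.
unfold dV_dr, dV_dth, Eplus, Eminus.
pose proof (pow2_sqrt 3 ltac:(lra)) as Hsqrt3.
field_simplify; [|auto].
rewrite Hsqrt3; field; auto.
Qed.

Definition radial_speed (x y : R -> R) (t : R) : R := Derive (fun s => rad (x s) (y s)) t.
Definition ang_momentum (x y : R -> R) (t : R) : R := x t * Derive y t - y t * Derive x t.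

Section PolarKinematics.
Variables (a b : R) (x y th : R -> R).
Hypothesis Hsmooth : forall t, a < t < b ->
  ex_derive x t /\ ex_derive (Derive x) t /\ ex_derive y t /\ ex_derive (Derive y) t /\
  ex_derive th t.
Hypothesis Hpolar : forall t, a < t < b ->
  0 < rad (x t) (y t) /\ x t = rad (x t) (y t) * cos (th t) /\ y t = rad (x t) (y t) * sin (th t).

Lemma polar_near (t : R) : a < t < b -> locally t (fun s =>
  x s = rad (x s) (y s) * cos (th s) /\ y s = rad (x s) (y s) * sin (th s)).
Proof.
intro Ht; apply (filter_imp (fun s => a < s < b)); [|exact (interval_nbhd _ _ _ Ht)].
intros s Hs; apply (Hpolar s Hs).
Qed.

Lemma radial_velocity (t : R) : a < t < b ->
  is_derive (fun s => rad (x s) (y s)) t (radial_speed x y t).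
Proof.
intro Ht; destruct (Hsmooth t Ht) as (Hx & _ & Hy & _), (Hpolar t Ht) as (Hr & _).
apply Derive_correct; eexists.
apply is_derive_rad; [apply Derive_correct .. |]; assumption.
Qed.

Lemma cartesian_velocity (t : R) : a < t < b ->
  Derive x t = radial_speed x y t * cos (th t) - rad (x t) (y t) * sin (th t) * Derive th t /\
  Derive y t = radial_speed x y t * sin (th t) + rad (x t) (y t) * cos (th t) * Derive th t.
Proof.
intro Ht.
pose proof (radial_velocity t Ht) as Hdr.
destruct (Hsmooth t Ht) as (_ & _ & _ & _ & Hth); apply Derive_correct in Hth.
destruct (is_derive_polar _ _ _ _ _ Hdr Hth) as [Hcos Hsin].
pose proof (polar_near t Ht) as Hnear.
split; apply is_derive_unique.
- exact (is_derive_ext_loc _ _ _ _ (filter_imp _ _ (fun s Hs => eq_sym (proj1 Hs)) Hnear) Hcos).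
- exact (is_derive_ext_loc _ _ _ _ (filter_imp _ _ (fun s Hs => eq_sym (proj2 Hs)) Hnear) Hsin).
Qed.

Lemma angular_velocity (t : R) : a < t < b ->
  Derive th t = ang_momentum x y t / rad (x t) (y t) ^ 2.
Proof.
intro Ht.
destruct (Hpolar t Ht) as (Hr & Hx & Hy), (cartesian_velocity t Ht) as [Hvx Hvy].
set (r := rad (x t) (y t)) in *; clearbody r.
assert (Hp : ang_momentum x y t = r ^ 2 * Derive th t).
{ unfold ang_momentum; rewrite Hvx, Hvy, Hx, Hy, <- (mul_sin2_cos2 (r ^ 2 * _) (th t)); ring. }
rewrite Hp; field; lra.
Qed.

Lemma radial_speed_polar (t : R) : a < t < b ->
  radial_speed x y t = Derive x t * cos (th t) + Derive y t * sin (th t).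
Proof.
intro Ht; destruct (cartesian_velocity t Ht) as [-> ->].
rewrite <- (mul_sin2_cos2 (radial_speed x y t) (th t)) at 1; ring.
Qed.

Section PolarDynamics.
Variables (k1 k2 k3 : R).
Hypothesis Hnewton : forall t, a < t < b ->
  Derive (Derive x) t = - Derive (fun u => Vcart k1 k2 k3 (th t) u (y t)) (x t) /\
  Derive (Derive y) t = - Derive (fun v => Vcart k1 k2 k3 (th t) (x t) v) (y t).

Lemma cartesian_acceleration (t : R) : a < t < b ->
  Derive (Derive x) t = - (dV_dr k1 k2 k3 (rad (x t) (y t)) (th t) * cos (th t)
                           - dV_dth k2 k3 (rad (x t) (y t)) (th t) * sin (th t) / rad (x t) (y t)) /\
  Derive (Derive y) t = - (dV_dr k1 k2 k3 (rad (x t) (y t)) (th t) * sin (th t)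
                           + dV_dth k2 k3 (rad (x t) (y t)) (th t) * cos (th t) / rad (x t) (y t)).
Proof.
intro Ht; destruct (Hpolar t Ht) as (Hr & Hx & Hy), (Hnewton t Ht) as [-> ->].
split; f_equal; apply is_derive_unique; [apply Vcart_dx | apply Vcart_dy]; assumption.
Qed.

Lemma angular_momentum_rate (t : R) : a < t < b ->
  is_derive (ang_momentum x y) t (- dV_dth k2 k3 (rad (x t) (y t)) (th t)).
Proof.
intro Ht.
destruct (Hsmooth t Ht) as (Hx1 & Hx2 & Hy1 & Hy2 & _); apply Derive_correct in Hx1, Hx2, Hy1, Hy2.
destruct (Hpolar t Ht) as (Hr & Hx & Hy), (cartesian_acceleration t Ht) as [Hax Hay].
rewrite Hax in Hx2; rewrite Hay in Hy2.
unfold ang_momentum; differentiate.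
set (r := rad (x t) (y t)) in *; clearbody r.
rewrite Hx, Hy, <- (mul_sin2_cos2 (- dV_dth k2 k3 r (th t)) (th t)).
field; lra.
Qed.

Lemma radial_speed_rate (t : R) : a < t < b ->
  is_derive (radial_speed x y) t
    (rad (x t) (y t) * (ang_momentum x y t / rad (x t) (y t) ^ 2) ^ 2
     - dV_dr k1 k2 k3 (rad (x t) (y t)) (th t)).
Proof.
intro Ht.
destruct (Hsmooth t Ht) as (_ & Hx2 & _ & Hy2 & Hth); apply Derive_correct in Hx2, Hy2, Hth.
destruct (Hpolar t Ht) as (Hr & _), (cartesian_acceleration t Ht) as [Hax Hay].
rewrite Hax in Hx2; rewrite Hay in Hy2.
apply (is_derive_ext_loc (fun s => Derive x s * cos (th s) + Derive y s * sin (th s))).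
{ apply (filter_imp (fun s => a < s < b)); [|exact (interval_nbhd _ _ _ Ht)].
  intros s Hs; symmetry; apply radial_speed_polar; assumption. }
differentiate.
rewrite <- (angular_velocity t Ht).
destruct (cartesian_velocity t Ht) as [-> ->].
set (r := rad (x t) (y t)) in *; clearbody r.
rewrite <- (mul_sin2_cos2 (r * _ - _) (th t)); field; lra.
Qed.

End PolarDynamics.
End PolarKinematics.

Theorem mainTheorem6 (k1 k2 k3 a b : R) (x y th : R -> R) :
  (forall t, a < t < b ->
     ex_derive x t /\ ex_derive (Derive x) t /\
     ex_derive y t /\ ex_derive (Derive y) t /\
     ex_derive th t /\
     0 < rad (x t) (y t) /\
     x t = rad (x t) (y t) * cos (th t) /\
     y t = rad (x t) (y t) * sin (th t) /\
     Derive (Derive x) t = - Derive (fun u => Vcart k1 k2 k3 (th t) u (y t)) (x t) /\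
     Derive (Derive y) t = - Derive (fun v => Vcart k1 k2 k3 (th t) (x t) v) (y t)) ->
  forall t, a < t < b ->
    is_derive
      (fun s => Jfun k1 k2 k3 (rad (x s) (y s)) (th s)
                  (Derive (fun u => rad (x u) (y u)) s)
                  (x s * Derive y s - y s * Derive x s))
      t 0.
Proof.
intros Hmotion t Ht.
assert (Hsmooth : forall s, a < s < b ->
  ex_derive x s /\ ex_derive (Derive x) s /\ ex_derive y s /\ ex_derive (Derive y) s /\
  ex_derive th s) by (intros s Hs; apply Hmotion in Hs; tauto).
assert (Hpolar : forall s, a < s < b -> 0 < rad (x s) (y s) /\
  x s = rad (x s) (y s) * cos (th s) /\ y s = rad (x s) (y s) * sin (th s))
  by (intros s Hs; apply Hmotion in Hs; tauto).
assert (Hnewton : forall s, a < s < b ->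
  Derive (Derive x) s = - Derive (fun u => Vcart k1 k2 k3 (th s) u (y s)) (x s) /\
  Derive (Derive y) s = - Derive (fun v => Vcart k1 k2 k3 (th s) (x s) v) (y s))
  by (intros s Hs; apply Hmotion in Hs; tauto).
destruct (Hsmooth t Ht) as (_ & _ & _ & _ & Hth), (Hpolar t Ht) as (Hr & _).
apply (Jfun_conserved k1 k2 k3 (fun s => rad (x s) (y s)) th (radial_speed x y) (ang_momentum x y)).
- simpl; lra.
- exact (radial_velocity a b x y th Hsmooth Hpolar t Ht).
- rewrite <- (angular_velocity a b x y th Hsmooth Hpolar t Ht); exact (Derive_correct _ _ Hth).
- exact (radial_speed_rate a b x y th Hsmooth Hpolar k1 k2 k3 Hnewton t Ht).
- exact (angular_momentum_rate a b x y th Hsmooth Hpolar k1 k2 k3 Hnewton t Ht).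
Qed.
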